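(* Let $M$ nodes with capacities $C_1,\dots,C_M>0$ and $N$ classes with fixed loop-free routes be given as in the context, with external rates $r_n>0$ and mean loads $\rho_n>0$. For every $J\in\mathbb{Z}_+^N$, the system of equations \[ r^{n,J}_m=\begin{cases}0 & n\notin\mathcal{N}_m\\ r_n & p^n(m)=0\\ r^{n,J}_{p^n(m)}S^J_{p^n(m)} & \text{otherwise},\end{cases}\qquad \rho^{n,J}_m=\begin{cases}0 & n\notin\mathcal{N}_m\\ \rho_n & p^n(m)=0\\ \rho^{n,J}_{p^n(m)}S^J_{p^n(m)} & \text{otherwise},\end{cases} \] with \[ S^J_m=\frac{C_m}{\max\{C_m,\ \sum_{n\in\mathcal{N}_m}(J_n r^{n,J}_m+\rho^{n,J}_m)\}}, \] has a unique solution $(r^{n,J}_m,\rho^{n,J}_m)_{n,m}$. Furthermore, for fixed $J$, $r^{n,J}_m$ and $\rho^{n,J}_m$ are continuous functions of the parameters $(r_n)_n$ and $(\rho_n)_n$.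
   Context: Class $n\in\{1,\dots,N\}$ follows a fixed route $\pi^n=[\pi^n_1,\dots,\pi^n_{l_n}]$ of pairwise distinct nodes in $\{1,\dots,M\}$ (loop-free route). $\mathcal{N}_m=\{n:\pi^n_i=m\text{ for some }i\}$ is the set of classes passing through node $m$. For $n\in\mathcal{N}_m$, $p^n(m)=\pi^n_{i-1}$ if $m=\pi^n_i$ with $i\ge2$, and $p^n(m)=0$ if $m=\pi^n_1$. The network as a whole need not be feedforward. *)

From mathcomp Require Import all_boot all_order all_algebra.
From mathcomp Require Import reals.
Set Implicit Arguments. Unset Strict Implicit. Unset Printing Implicit Defensive.
Import Order.TTheory GRing.Theory Num.Theory.
Local Open Scope ring_scope.

(* Nodes are 'I_M (node m+1 of the paper is m), classes are 'I_N.
   route n : seq 'I_M is the route pi^n of class n (list of distinct nodes).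
   n \in N_m  <->  m \in route n. *)

(* p^n(m): predecessor of m on route n; None encodes p^n(m) = 0
   (m is the first node of the route). Only meaningful when m \in route n. *)
Definition prev_node (M N : nat) (route : 'I_N -> seq 'I_M) (n : 'I_N) (m : 'I_M)
  : option 'I_M :=
  if index m (route n) is k.+1 then Some (nth m (route n) k) else None.

Definition Sfac (R : realType) (M N : nat) (C : 'I_M -> R)
  (route : 'I_N -> seq 'I_M) (J : 'I_N -> nat)
  (r rho : 'I_N -> 'I_M -> R) (m : 'I_M) : R :=
  C m / Num.max (C m) (\sum_(n < N | m \in route n) ((J n)%:R * r n m + rho n m)).

Definition flow_rhs (R : realType) (M N : nat) (route : 'I_N -> seq 'I_M)
  (ext : 'I_N -> R) (x : 'I_N -> 'I_M -> R) (S : 'I_M -> R)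
  (n : 'I_N) (m : 'I_M) : R :=
  if m \in route n then
    match prev_node route n m with
    | None => ext n
    | Some p => x n p * S p
    end
  else 0.

Definition is_solution (R : realType) (M N : nat) (C : 'I_M -> R)
  (route : 'I_N -> seq 'I_M) (J : 'I_N -> nat) (rn rhon : 'I_N -> R)
  (r rho : 'I_N -> 'I_M -> R) : Prop :=
  forall n m,
    r n m = flow_rhs route rn r (Sfac C route J r rho) n m /\
    rho n m = flow_rhs route rhon rho (Sfac C route J r rho) n m.

(* A solution is determined by the vector of node scalings S = S^J in (0,1]^M:
   along route n one has r^n_m = r_n * prod_{k upstream of m} S_k, and likewise
   for rho, so the system is equivalent to the fixed-point equation
   S_m = C_m / max(C_m, load_m(S)) with load_m(S) = sum_n w_n prod_{k upstream} S_k
   and w_n = J_n r_n + rho_n.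

   Uniqueness: for two scaling vectors S, S' the sum over the nodes of
   (ln S'_m - ln S_m) (S_m load_m(S) - S'_m load_m(S')) telescopes along each route
   into a quantity bounded by the gap b (a/b - 1 - ln (a/b)) at a = b = w_n, i.e.
   by 0, with strict inequality as soon as S and S' differ on some route.  For two
   fixed points every term is nonnegative, hence S = S'.

   Existence and continuity: by induction on a set F of nodes, solve the equations
   at the nodes of F, the scalings at the other nodes being free parameters.  To add
   a node m0, its scaling s must be a root of s max(C_m0, load_m0) - C_m0.  The same
   telescoping argument shows this function to be strictly increasing in s, the
   intermediate value theorem provides the root, and monotonicity makes the root,
   hence the extended solution, continuous in the parameters. *)

From mathcomp Require Import all_boot all_order all_algebra.
From mathcomp Require Import ring lra.
From mathcomp Require Import boolp reals exp topology normedtype.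
From mathcomp Require classical_sets.
Import Order.TTheory GRing.Theory Num.Theory.
Import numFieldNormedType.Exports.
Local Open Scope ring_scope.

Section LnInequalities.
Context {R : realType}.
Implicit Types a b x y : R.

Lemma mul_lnB_le x y : 0 < x -> 0 < y -> x * (ln y - ln x) <= y - x.
Proof.
move=> x0 y0; have yx0 : 0 < y / x by rewrite divr_gt0.
have le : ln (y / x) <= y / x - 1.
  have := @le_ln1Dx R (y / x - 1); rewrite [1 + _]addrC subrK; apply; lra.
rewrite -ln_div ?posrE //.
have -> : y - x = x * (y / x - 1) by field; rewrite lt0r_neq0.
by rewrite ler_pM2l.
Qed.

Lemma mul_lnB_lt x y : 0 < x -> 0 < y -> x != y -> x * (ln y - ln x) < y - x.
Proof.
move=> x0 y0 xy; have yx0 : 0 < y / x by rewrite divr_gt0.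
have yx1 : y / x != 1 by apply: contraNneq xy => /divr1_eq ->.
have ln0 : ln (y / x) != 0 by rewrite ln_eq0 ?divr_gt0.
have lt : ln (y / x) < y / x - 1.
  by have := expR_gt1Dx ln0; rewrite lnK ?posrE //; lra.
rewrite -ln_div ?posrE //.
have -> : y - x = x * (y / x - 1) by field; rewrite lt0r_neq0.
by rewrite ltr_pM2l.
Qed.

Definition ln_gap a b := a - b - b * (ln a - ln b).

Lemma ln_gapxx a : ln_gap a a = 0.
Proof. by rewrite /ln_gap !subrr mulr0 subr0. Qed.

Lemma ln_gap_ge0 a b : 0 < a -> 0 < b -> 0 <= ln_gap a b.
Proof. by move=> a0 b0; rewrite /ln_gap subr_ge0 mul_lnB_le. Qed.

Lemma ln_gap_scale {a b x y} : 0 < a -> 0 < b -> 0 < x -> 0 < y ->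
  ln_gap a b - ln_gap (a * x) (b * y) - (ln y - ln x) * (a * x - b * y)
  = (1 - y) * ln_gap a b + a * (y - x - x * (ln y - ln x)).
Proof. by move=> a0 b0 x0 y0; rewrite /ln_gap !lnM ?posrE //; ring. Qed.

Lemma ln_gap_step_le {a b x y} : 0 < a -> 0 < b -> 0 < x <= 1 -> 0 < y <= 1 ->
  (ln y - ln x) * (a * x - b * y) + ln_gap (a * x) (b * y) <= ln_gap a b.
Proof.
move=> a0 b0 /andP[x0 x1] /andP[y0 y1].
have := ln_gap_scale a0 b0 x0 y0.
have : 0 <= (1 - y) * ln_gap a b by rewrite mulr_ge0 ?ln_gap_ge0 // subr_ge0.
have : 0 <= a * (y - x - x * (ln y - ln x)).
  by rewrite mulr_ge0 ?(ltW a0) // subr_ge0 mul_lnB_le.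
lra.
Qed.

Lemma ln_gap_step_lt {a b x y} : 0 < a -> 0 < b -> 0 < x <= 1 -> 0 < y <= 1 ->
  x != y -> (ln y - ln x) * (a * x - b * y) + ln_gap (a * x) (b * y) < ln_gap a b.
Proof.
move=> a0 b0 /andP[x0 x1] /andP[y0 y1] xy.
have := ln_gap_scale a0 b0 x0 y0.
have : 0 <= (1 - y) * ln_gap a b by rewrite mulr_ge0 ?ln_gap_ge0 // subr_ge0.
have : 0 < a * (y - x - x * (ln y - ln x)).
  by rewrite mulr_gt0 // subr_gt0 mul_lnB_lt.
lra.
Qed.

End LnInequalities.

Section Throttle.
Context {R : realType}.
Implicit Types c L : R.

Definition throttle c L := c / Num.max c L.

Lemma throttle_in01 c L : 0 < c -> 0 < throttle c L <= 1.
Proof.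
move=> c0; have m0 : 0 < Num.max c L by rewrite lt_max c0.
by rewrite divr_gt0 //= ler_pdivrMr // mul1r le_max lexx.
Qed.

Lemma throttle_mul_le c L : 0 < c -> throttle c L * L <= c.
Proof.
move=> c0; have m0 : 0 < Num.max c L by rewrite lt_max c0.
by rewrite /throttle mulrAC ler_pdivrMr // ler_pM2l // le_max lexx orbT.
Qed.

Lemma throttle_mul_eq c L : 0 < c -> throttle c L < 1 -> throttle c L * L = c.
Proof.
rewrite /throttle => c0; have [Lc|cL _] := leP L c.
  by rewrite mulfV ?ltxx // gt_eqF.
by rewrite mulfVK // gt_eqF // (lt_trans c0).
Qed.

Lemma dist_maxr c L L' : `|Num.max c L - Num.max c L'| <= `|L - L'|.
Proof.
have [h|h] := leP L c; have [h'|h'] := leP L' c.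
- by rewrite subrr normr0.
- by rewrite distrC (distrC L) !ger0_norm; lra.
- by rewrite !ger0_norm; lra.
- by [].
Qed.

End Throttle.

Section Vectors.
Context {R : realType} {I : Type}.
Implicit Types (x y : I -> R) (d : R).

Definition pos_valued x := forall i, 0 < x i.
Definition frac_valued x := forall i, 0 < x i <= 1.
Definition nearby d x y := forall i, `|x i - y i| < d.

Lemma frac_valued1 : frac_valued (fun=> 1 : R).
Proof. by move=> i; rewrite ltr01 lexx. Qed.

Lemma nearby_refl {d x} : 0 < d -> nearby d x x.
Proof. by move=> d0 i; rewrite subrr normr0. Qed.

Lemma nearby_minl {d d' x y} : nearby (Num.min d d') x y -> nearby d x y.
Proof. by move=> h i; have := h i; rewrite lt_min => /andP[]. Qed.

Lemma nearby_minr {d d' x y} : nearby (Num.min d d') x y -> nearby d' x y.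
Proof. by move=> h i; have := h i; rewrite lt_min => /andP[]. Qed.

Lemma prod_frac (l : seq I) {x} : frac_valued x -> 0 < \prod_(i <- l) x i <= 1.
Proof.
move=> Hx; elim: l => [|i l /andP[p0 p1]]; first by rewrite big_nil ltr01 lexx.
by have /andP[xi0 xi1] := Hx i; rewrite big_cons mulr_gt0 //= mulr_ile1 ?(ltW xi0) ?(ltW p0).
Qed.

Lemma dist_prod_frac (l : seq I) {x y d} : frac_valued x -> frac_valued y ->
  (forall i, `|x i - y i| <= d) ->
  `|\prod_(i <- l) x i - \prod_(i <- l) y i| <= (size l)%:R * d.
Proof.
move=> Hx Hy hd; elim: l => [|i l IH]; first by rewrite !big_nil subrr normr0 mul0r.
rewrite !big_cons.
have -> : x i * \prod_(j <- l) x j - y i * \prod_(j <- l) y j =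
  (x i - y i) * \prod_(j <- l) x j + y i * (\prod_(j <- l) x j - \prod_(j <- l) y j).
  by ring.
apply: (le_trans (ler_normD _ _)); rewrite !normrM /= -addn1 natrD mulrDl mul1r addrC.
have /andP[p0 p1] := prod_frac l Hx; have /andP[yi0 yi1] := Hy i.
rewrite (gtr0_norm p0) (gtr0_norm yi0) lerD //.
  by apply: le_trans _ IH; rewrite ler_piMl.
by apply: le_trans _ (hd i); rewrite ler_piMr.
Qed.

End Vectors.

Section Update.
Context {R : realType} {I : eqType}.
Implicit Types (x y : I -> R) (d s t : R).

Lemma frac_valued_with {x} i {s} : frac_valued x -> 0 < s <= 1 ->
  frac_valued [eta x with i |-> s].
Proof. by move=> x_frac s01 j /=; case: ifP. Qed.

Lemma nearby_with {d x y} i {s t} : nearby d x y -> `|s - t| < d ->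
  nearby d [eta x with i |-> s] [eta y with i |-> t].
Proof. by move=> xy st j /=; case: ifP. Qed.

End Update.

Section MonotoneRoots.
Context {R : realType}.
Variables (P : Type) (ok : P -> Prop) (close : R -> P -> P -> Prop).
Hypothesis close_min : forall {d d' p p0},
  close (Num.min d d') p p0 -> close d p p0 /\ close d' p p0.
Variables (k : P -> R -> R) (z : P -> R).
Hypothesis k_incr : forall {p s t}, ok p -> 0 < s <= 1 -> 0 < t <= 1 -> s < t ->
  k p s < k p t.
Hypothesis z_root : forall {p}, ok p -> 0 < z p <= 1 /\ k p (z p) = 0.
Hypothesis k_cont : forall {p0 s}, ok p0 -> 0 < s <= 1 -> forall e, 0 < e ->
  exists2 d, 0 < d & forall p, ok p -> close d p p0 -> `|k p s - k p0 s| < e.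

Lemma root_gt p t : ok p -> 0 < t <= 1 -> k p t < 0 -> t < z p.
Proof.
move=> okp t01 kt; have [z01 kz] := z_root okp.
rewrite ltNge le_eqVlt; apply/negP => /orP[/eqP zt|zt].
  by move: kt; rewrite -zt kz ltxx.
by have := k_incr okp z01 t01 zt; lra.
Qed.

Lemma root_lt p t : ok p -> 0 < t <= 1 -> 0 < k p t -> z p < t.
Proof.
move=> okp t01 kt; have [z01 kz] := z_root okp.
rewrite ltNge le_eqVlt; apply/negP => /orP[/eqP zt|zt].
  by move: kt; rewrite zt kz ltxx.
by have := k_incr okp t01 z01 zt; lra.
Qed.

Lemma root_continuous p0 : ok p0 -> forall e, 0 < e ->
  exists2 d, 0 < d & forall p, ok p -> close d p p0 -> `|z p - z p0| < e.
Proof.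
move=> ok0 e e0; have [/andP[z00 z01] kz0] := z_root ok0.
have [dl dl0 lower] : exists2 d, 0 < d &
    forall p, ok p -> close d p p0 -> z p0 - e < z p.
  have [le0|gt0] := leP (z p0 - e) 0.
    exists 1 => // p okp _; have [/andP[zp0 _] _] := z_root okp; lra.
  have t01 : 0 < z p0 - e <= 1 by apply/andP; lra.
  have kneg : 0 < - k p0 (z p0 - e).
    by rewrite oppr_gt0 -kz0 k_incr //; [apply/andP | lra].
  have [d d0 hd] := k_cont ok0 t01 _ kneg.
  exists d => // p okp cp; apply: root_gt => //.
  by have := hd p okp cp; rewrite ltr_norml; lra.
have [du du0 upper] : exists2 d, 0 < d &
    forall p, ok p -> close d p p0 -> z p < z p0 + e.
  have [gt1|le1] := ltP 1 (z p0 + e).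
    exists 1 => // p okp _; have [/andP[_ zp1] _] := z_root okp; lra.
  have t01 : 0 < z p0 + e <= 1 by apply/andP; lra.
  have kpos : 0 < k p0 (z p0 + e).
    by rewrite -kz0 k_incr //; [apply/andP | lra].
  have [d d0 hd] := k_cont ok0 t01 _ kpos.
  exists d => // p okp cp; apply: root_lt => //.
  by have := hd p okp cp; rewrite ltr_norml; lra.
exists (Num.min dl du); first by rewrite lt_min dl0.
move=> p okp /close_min[cl cu].
by have := lower p okp cl; have := upper p okp cu; rewrite ltr_norml; lra.
Qed.

End MonotoneRoots.

Section IntermediateValue.
Context {R : realType}.
Variables (a b : R).
Hypothesis ab : a <= b.

Definition clamp (t : R) := Num.max a (Num.min b t).

Lemma clamp_in t : a <= clamp t <= b.
Proof. by rewrite le_max lexx ge_max ab ge_min lexx. Qed.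

Lemma clamp_id t : a <= t <= b -> clamp t = t.
Proof. by case/andP=> ta tb; rewrite /clamp (min_r tb) (max_r ta). Qed.

Lemma dist_clamp t t' : `|clamp t - clamp t'| <= `|t - t'|.
Proof.
apply: (le_trans (dist_maxr a _ _)).
have [h|h] := leP b t; have [h'|h'] := leP b t'.
- by rewrite subrr normr0.
- by rewrite !ger0_norm; lra.
- by rewrite distrC (distrC t) !ger0_norm; lra.
- by [].
Qed.

Lemma IVT_eps (f : R -> R) :
  (forall s, a <= s <= b -> forall e, 0 < e -> exists2 d, 0 < d &
     forall t, a <= t <= b -> `|t - s| < d -> `|f t - f s| < e) ->
  f a <= 0 <= f b -> exists2 c, a <= c <= b & f c = 0.
Proof.
move=> fcont /andP[fa fb].
have gcont : continuous (f \o clamp).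
  move=> t0; apply/cvgrPdist_lt => e e0.
  have [d d0 hd] := fcont _ (clamp_in t0) _ e0.
  apply/nbhs_ballP; exists d => // t /=; rewrite /ball /= => tt0.
  by rewrite distrC hd ?clamp_in // (le_lt_trans (dist_clamp _ _)) // distrC.
have [|c] := @IVT R (f \o clamp) a b 0 ab (continuous_subspaceT gcont).
  by rewrite /= !clamp_id ?lexx ?ab // ge_min fa le_max fb orbT.
rewrite in_itv /= => cab fc; exists c => //.
by rewrite -fc /= clamp_id.
Qed.

End IntermediateValue.

Section Telescoping.
Context {R : realType} {I : eqType}.
Variables (x y : I -> R).
Hypotheses (x_frac : frac_valued x) (y_frac : frac_valued y).

Fixpoint chain_gap (l : seq I) (a b : R) : R :=
  if l is i :: l' then
    (ln (y i) - ln (x i)) * (a * x i - b * y i) + chain_gap l' (a * x i) (b * y i)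
  else 0.

Lemma chain_gap_le l {a b} : 0 < a -> 0 < b -> chain_gap l a b <= ln_gap a b.
Proof.
elim: l a b => [|i l IH] a b a0 b0 /=; first exact: ln_gap_ge0.
have /andP[xi0 _] := x_frac i; have /andP[yi0 _] := y_frac i.
have := ln_gap_step_le a0 b0 (x_frac i) (y_frac i).
have := IH _ _ (mulr_gt0 a0 xi0) (mulr_gt0 b0 yi0); lra.
Qed.

Lemma chain_gap_lt l {a b} : 0 < a -> 0 < b -> has (fun i => x i != y i) l ->
  chain_gap l a b < ln_gap a b.
Proof.
elim: l a b => [|i l IH] a b a0 b0 //=.
have /andP[xi0 _] := x_frac i; have /andP[yi0 _] := y_frac i.
case/orP=> [xyi|xyl].
  have := ln_gap_step_lt a0 b0 (x_frac i) (y_frac i) xyi.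
  have := chain_gap_le l (mulr_gt0 a0 xi0) (mulr_gt0 b0 yi0); lra.
have := ln_gap_step_le a0 b0 (x_frac i) (y_frac i).
have := IH _ _ (mulr_gt0 a0 xi0) (mulr_gt0 b0 yi0) xyl; lra.
Qed.

Lemma chain_gapE l a b : uniq l ->
  \sum_(i <- l) (ln (y i) - ln (x i)) *
     (a * \prod_(j <- take (index i l) l) x j * x i
      - b * \prod_(j <- take (index i l) l) y j * y i)
  = chain_gap l a b.
Proof.
elim: l a b => [|i l IH] a b; first by rewrite big_nil.
rewrite cons_uniq => /andP[il ul] /=.
rewrite big_cons /= eqxx /= !big_nil !mulr1 -IH //; congr (_ + _).
apply: eq_big_seq => j jl.
have -> : (i == j) = false by apply/negbTE; apply: contraNneq il => ->.
by rewrite /= !big_cons !mulrA.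
Qed.

End Telescoping.

Section Network.
Context {R : realType} {M N : nat}.
Variables (C : 'I_M -> R) (route : 'I_N -> seq 'I_M).
Hypothesis C_gt0 : forall m, 0 < C m.
Hypothesis route_uniq : forall n, uniq (route n).
Implicit Types (F : {set 'I_M}) (w : 'I_N -> R) (S sg : 'I_M -> R).

Definition upstream n m := take (index m (route n)) (route n).
Definition transmit S n m := \prod_(k <- upstream n m) S k.
Definition load w S m := \sum_(n < N | m \in route n) w n * transmit S n m.

Lemma size_upstream n m : (size (upstream n m) <= size (route n))%N.
Proof. by rewrite size_take_min geq_minr. Qed.

Lemma transmit_frac {S} n m : frac_valued S -> 0 < transmit S n m <= 1.
Proof. exact: prod_frac. Qed.

Lemma load_ge0 w S m : pos_valued w -> frac_valued S -> 0 <= load w S m.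
Proof.
move=> w_gt0 S_frac; apply: sumr_ge0 => n _.
by have /andP[t0 _] := transmit_frac n m S_frac; rewrite mulr_ge0 ?ltW.
Qed.

Lemma load_le_sum w S m : pos_valued w -> frac_valued S -> load w S m <= \sum_n w n.
Proof.
move=> w_gt0 S_frac; apply: (le_trans (y := \sum_(n < N | m \in route n) w n)).
  apply: ler_sum => n _; have /andP[t0 t1] := transmit_frac n m S_frac.
  by rewrite ler_piMr // ltW.
rewrite [leRHS](bigID (fun n => m \in route n)) /= lerDl.
by apply: sumr_ge0 => n _; rewrite ltW.
Qed.

Lemma load_unrouted w S m : (forall n, m \notin route n) -> load w S m = 0.
Proof. by move=> h; rewrite /load big_pred0 // => n; apply/negbTE. Qed.

Definition dissipation w S S' m :=
  (ln (S' m) - ln (S m)) * (S m * load w S m - S' m * load w S' m).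

Lemma sum_dissipationE w S S' :
  \sum_m dissipation w S S' m = \sum_n chain_gap S S' (route n) (w n) (w n).
Proof.
transitivity (\sum_m \sum_(n < N | m \in route n) (ln (S' m) - ln (S m)) *
   (w n * transmit S n m * S m - w n * transmit S' n m * S' m)).
  apply: eq_bigr => m _; rewrite /dissipation (mulrC (S m)) (mulrC (S' m)).
  by rewrite !mulr_suml -sumrB mulr_sumr.
rewrite (exchange_big_dep xpredT) //=; apply: eq_bigr => n _.
by rewrite -chain_gapE // [RHS]big_uniq.
Qed.

Lemma sum_dissipation_lt0 {w S S' n m} : pos_valued w -> frac_valued S -> frac_valued S' ->
  m \in route n -> S m != S' m -> \sum_m dissipation w S S' m < 0.
Proof.
move=> w_gt0 S_frac S'_frac mn SS'; rewrite sum_dissipationE (bigD1 n) //=.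
have : chain_gap S S' (route n) (w n) (w n) < 0.
  by rewrite -(ln_gapxx (w n)) chain_gap_lt //; apply/hasP; exists m.
have : \sum_(n' | n' != n) chain_gap S S' (route n') (w n') (w n') <= 0.
  by apply: sumr_le0 => n' _; rewrite -(ln_gapxx (w n')) chain_gap_le.
lra.
Qed.

Definition partial_fixpoint (F : {set 'I_M}) w sg S :=
  forall m, S m = if m \in F then throttle (C m) (load w S m) else sg m.

Lemma partial_fixpoint_frac {F w sg S} : frac_valued sg ->
  partial_fixpoint F w sg S -> frac_valued S.
Proof. by move=> sg_frac HS m; rewrite HS; case: ifP => _; [exact: throttle_in01|]. Qed.

Lemma dissipation_ge0 {F w sg sg' S S' m} : frac_valued sg -> frac_valued sg' ->
  partial_fixpoint F w sg S -> partial_fixpoint F w sg' S' -> m \in F ->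
  0 <= dissipation w S S' m.
Proof.
move=> sg_frac sg'_frac HS HS' mF; rewrite /dissipation.
have /andP[s0 s1] := partial_fixpoint_frac sg_frac HS m.
have /andP[t0 t1] := partial_fixpoint_frac sg'_frac HS' m.
have eS := HS m; have eS' := HS' m; rewrite mF in eS eS'.
have [lt|gt|->] := ltgtP (S m) (S' m); last by rewrite subrr mul0r.
- have e1 : S m * load w S m = C m.
    by rewrite eS throttle_mul_eq // -eS (lt_le_trans lt).
  have e2 : S' m * load w S' m <= C m by rewrite eS' throttle_mul_le.
  by rewrite mulr_ge0 // subr_ge0 ?e1 // ler_ln ?posrE // ltW.
- have e1 : S' m * load w S' m = C m.
    by rewrite eS' throttle_mul_eq // -eS' (lt_le_trans gt).
  have e2 : S m * load w S m <= C m by rewrite eS throttle_mul_le.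
  by rewrite mulr_le0 // subr_le0 ?e1 // ler_ln ?posrE // ltW.
Qed.

Lemma fixpoint_unique w sg sg' S S' : pos_valued w ->
  frac_valued sg -> frac_valued sg' ->
  partial_fixpoint setT w sg S -> partial_fixpoint setT w sg' S' -> S = S'.
Proof.
move=> w_gt0 sg_frac sg'_frac HS HS'; apply/funext => m.
have S_frac := partial_fixpoint_frac sg_frac HS.
have S'_frac := partial_fixpoint_frac sg'_frac HS'.
have [n mn|unrouted] := pickP (fun n => m \in route n); last first.
  by rewrite HS HS' inE !load_unrouted // => n; rewrite unrouted.
apply/eqP; apply/negPn/negP => SS'.
have := sum_dissipation_lt0 w_gt0 S_frac S'_frac mn SS'.
suff : 0 <= \sum_m dissipation w S S' m by lra.
by apply: sumr_ge0 => k _; apply: dissipation_ge0 HS HS' _; rewrite ?inE.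
Qed.

Lemma partial_fixpoint_incr {F w sg m0 s s' S S'} : m0 \notin F ->
  pos_valued w -> frac_valued sg -> 0 < s <= 1 -> 0 < s' <= 1 ->
  partial_fixpoint F w [eta sg with m0 |-> s] S ->
  partial_fixpoint F w [eta sg with m0 |-> s'] S' -> s < s' ->
  s * Num.max (C m0) (load w S m0) < s' * Num.max (C m0) (load w S' m0).
Proof.
move=> m0F w_gt0 sg_frac s01 s'01 HS HS' ss'.
have sg_s := frac_valued_with m0 sg_frac s01.
have sg_s' := frac_valued_with m0 sg_frac s'01.
have S_frac := partial_fixpoint_frac sg_s HS.
have S'_frac := partial_fixpoint_frac sg_s' HS'.
have Sm0 : S m0 = s by rewrite HS (negbTE m0F) /= eqxx.
have S'm0 : S' m0 = s' by rewrite HS' (negbTE m0F) /= eqxx.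
set L := load w S m0; set L' := load w S' m0.
have [LC|CL] := leP L (C m0).
  rewrite (lt_le_trans (y := s' * C m0)) ?ltr_pM2r //.
  by rewrite ler_pM2l ?le_max ?lexx //; case/andP: s'01.
have [n mn] : exists n, m0 \in route n.
  have [n mn|unrouted] := pickP (fun n => m0 \in route n); first by exists n.
  by move: CL; rewrite /L load_unrouted ?ltNge ?ltW // => n; rewrite unrouted.
have rest : 0 <= \sum_(m | m != m0) dissipation w S S' m.
  apply: sumr_ge0 => m mm0; have [mF|mF] := boolP (m \in F).
    exact: dissipation_ge0 sg_s sg_s' HS HS' mF.
  by rewrite /dissipation HS HS' (negbTE mF) /= (negbTE mm0) subrr mul0r.
have SS' : S m0 != S' m0 by rewrite Sm0 S'm0 lt_eqF.
have := sum_dissipation_lt0 w_gt0 S_frac S'_frac mn SS'.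
rewrite (bigD1 m0) //= {1}/dissipation Sm0 S'm0 -/L -/L' => lt0.
have lnss' : 0 < ln s' - ln s.
  by case/andP: s01 => s0 _; case/andP: s'01 => s'0 _; rewrite subr_gt0 ltr_ln.
have : (ln s' - ln s) * (s * L - s' * L') < 0 by lra.
rewrite pmulr_rlt0 // subr_lt0 => lt.
apply: lt_le_trans lt _; rewrite ler_pM2l ?le_max ?lexx ?orbT //.
by case/andP: s'01.
Qed.

Definition load_modulus w0 := \sum_n (1 + w0 n * (size (route n))%:R).

Lemma load_modulus_ge0 {w0} : pos_valued w0 -> 0 <= load_modulus w0.
Proof. by move=> w0_gt0; apply: sumr_ge0 => n _; rewrite addr_ge0 // mulr_ge0 // ltW. Qed.

Lemma dist_load {w w0 S S0} m {d} : pos_valued w0 -> frac_valued S -> frac_valued S0 ->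
  0 < d -> nearby d w w0 -> nearby d S S0 ->
  `|load w S m - load w0 S0 m| <= d * load_modulus w0.
Proof.
move=> w0_gt0 S_frac S0_frac d0 ww0 SS0.
rewrite /load -sumrB /load_modulus mulr_sumr.
apply: (le_trans (ler_norm_sum _ _ _)).
apply: (le_trans (y := \sum_(n < N | m \in route n)
  d * (1 + w0 n * (size (route n))%:R))); last first.
  rewrite [leRHS](bigID (fun n => m \in route n)) /= lerDl.
  by apply: sumr_ge0 => n _; rewrite mulr_ge0 ?(ltW d0) // addr_ge0 // mulr_ge0 // ltW.
apply: ler_sum => n _.
have -> : w n * transmit S n m - w0 n * transmit S0 n m =
  (w n - w0 n) * transmit S n m + w0 n * (transmit S n m - transmit S0 n m).
  by ring.
apply: (le_trans (ler_normD _ _)); rewrite !normrM mulrDr mulr1.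
have /andP[t0 t1] := transmit_frac n m S_frac.
rewrite (gtr0_norm t0) (gtr0_norm (w0_gt0 n)) lerD //.
  by rewrite (le_trans _ (ltW (ww0 n))) // ler_piMr.
rewrite mulrCA ler_wpM2l ?(ltW (w0_gt0 n)) // mulrC.
apply: le_trans (dist_prod_frac _ S_frac S0_frac (fun k => ltW (SS0 k))) _.
by rewrite ler_wpM2r ?(ltW d0) // ler_nat size_upstream.
Qed.

Definition param_continuous (sol : ('I_N -> R) -> ('I_M -> R) -> 'I_M -> R) :=
  forall w0 sg0, pos_valued w0 -> frac_valued sg0 -> forall e, 0 < e ->
  exists2 d, 0 < d & forall w sg, pos_valued w -> frac_valued sg ->
    nearby d w w0 -> nearby d sg sg0 -> nearby e (sol w sg) (sol w0 sg0).

Definition solvable F := exists2 sol,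
  (forall w sg, pos_valued w -> frac_valued sg -> partial_fixpoint F w sg (sol w sg))
  & param_continuous sol.

Lemma solvable0 : solvable set0.
Proof.
exists (fun w sg => sg); first by move=> w sg _ _ m; rewrite inE.
by move=> w0 sg0 _ _ e e0; exists e.
Qed.

Section AddNode.
Variables (F : {set 'I_M}) (m0 : 'I_M) (sol : ('I_N -> R) -> ('I_M -> R) -> 'I_M -> R).
Hypothesis m0F : m0 \notin F.
Hypothesis sol_fix : forall {w sg}, pos_valued w -> frac_valued sg ->
  partial_fixpoint F w sg (sol w sg).
Hypothesis sol_cont : param_continuous sol.

Definition node_load w sg s := load w (sol w [eta sg with m0 |-> s]) m0.
Definition excess w sg s := s * Num.max (C m0) (node_load w sg s) - C m0.

Lemma sol_with_frac {w sg s} : pos_valued w -> frac_valued sg -> 0 < s <= 1 ->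
  frac_valued (sol w [eta sg with m0 |-> s]).
Proof.
move=> w_gt0 sg_frac s01; have sg_s := frac_valued_with m0 sg_frac s01.
exact: partial_fixpoint_frac sg_s (sol_fix w_gt0 sg_s).
Qed.

Lemma node_load_bounds {w sg s} : pos_valued w -> frac_valued sg -> 0 < s <= 1 ->
  0 <= node_load w sg s <= \sum_n w n.
Proof.
move=> w_gt0 sg_frac s01; have S_frac := sol_with_frac w_gt0 sg_frac s01.
by rewrite load_ge0 //= load_le_sum.
Qed.

Lemma excess_incr {w sg s s'} : pos_valued w -> frac_valued sg ->
  0 < s <= 1 -> 0 < s' <= 1 -> s < s' -> excess w sg s < excess w sg s'.
Proof.
move=> w_gt0 sg_frac s01 s'01 ss'; rewrite ltrD2r.
apply: (partial_fixpoint_incr m0F w_gt0 sg_frac s01 s'01 _ _ ss').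
  exact: sol_fix w_gt0 (frac_valued_with m0 sg_frac s01).
exact: sol_fix w_gt0 (frac_valued_with m0 sg_frac s'01).
Qed.

Lemma node_load_continuous {w0 sg0 s0} : pos_valued w0 -> frac_valued sg0 ->
  0 < s0 <= 1 -> forall e, 0 < e -> exists2 d, 0 < d & forall w sg s,
  pos_valued w -> frac_valued sg -> 0 < s <= 1 ->
  nearby d w w0 -> nearby d sg sg0 -> `|s - s0| < d ->
  `|node_load w sg s - node_load w0 sg0 s0| < e.
Proof.
move=> w0_gt0 sg0_frac s001 e e0.
have K0 := load_modulus_ge0 w0_gt0.
set e1 := e / (load_modulus w0 + 1).
have e10 : 0 < e1 by rewrite divr_gt0 // ltr_wpDl.
have [d1 d10 hd1] := sol_cont _ _ w0_gt0 (frac_valued_with m0 sg0_frac s001) _ e10.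
exists (Num.min d1 e1) => [|w sg s w_gt0 sg_frac s01 ww0 sgsg0 ss0].
  by rewrite lt_min d10.
have ss0' : `|s - s0| < d1 by move: ss0; rewrite lt_min => /andP[].
have SS0 : nearby e1 (sol w [eta sg with m0 |-> s]) (sol w0 [eta sg0 with m0 |-> s0]).
  apply: hd1 => //; first exact: frac_valued_with.
    exact: nearby_minl ww0.
  by move: (nearby_with m0 (nearby_minl sgsg0) ss0').
apply: le_lt_trans (dist_load m0 w0_gt0 (sol_with_frac w_gt0 sg_frac s01)
  (sol_with_frac w0_gt0 sg0_frac s001) e10 (nearby_minr ww0) SS0) _.
rewrite -subr_gt0.
have -> : e - e / (load_modulus w0 + 1) * load_modulus w0 = e1.
  by rewrite /e1; field; rewrite gt_eqF // ltr_wpDl.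
exact: e10.
Qed.

Lemma excess_continuous {w0 sg0 s0} : pos_valued w0 -> frac_valued sg0 ->
  0 < s0 <= 1 -> forall e, 0 < e -> exists2 d, 0 < d & forall w sg s,
  pos_valued w -> frac_valued sg -> 0 < s <= 1 ->
  nearby d w w0 -> nearby d sg sg0 -> `|s - s0| < d ->
  `|excess w sg s - excess w0 sg0 s0| < e.
Proof.
move=> w0_gt0 sg0_frac s001 e e0.
set M0 := Num.max (C m0) (node_load w0 sg0 s0).
have M00 : 0 <= M0 by rewrite le_max ltW.
set e2 := e / (2 * (M0 + 1)).
have e20 : 0 < e2 by rewrite divr_gt0 // mulr_gt0 // ltr_wpDl.
have e_half : 0 < e / 2 by rewrite divr_gt0.
have [d1 d10 hd1] := node_load_continuous w0_gt0 sg0_frac s001 _ e_half.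
exists (Num.min d1 e2) => [|w sg s w_gt0 sg_frac s01 ww0 sgsg0 ss0].
  by rewrite lt_min d10.
move: (ss0); rewrite lt_min => /andP[ss0d1 ss0e2].
have hL := hd1 w sg s w_gt0 sg_frac s01 (nearby_minl ww0) (nearby_minl sgsg0) ss0d1.
rewrite /excess -/M0.
have -> : s * Num.max (C m0) (node_load w sg s) - C m0 - (s0 * M0 - C m0) =
    (s - s0) * M0 + s * (Num.max (C m0) (node_load w sg s) - M0) by ring.
apply: le_lt_trans (ler_normD _ _) _; case/andP: s01 => s0' s1.
rewrite !normrM (ger0_norm M00) (gtr0_norm s0').
have t1 : `|s - s0| * M0 < e / 2.
  apply: le_lt_trans (_ : e2 * M0 < e / 2); first by rewrite ler_wpM2r // ltW.
  rewrite -subr_gt0 (_ : e / 2 - e2 * M0 = e2) //.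
  by rewrite /e2; field; rewrite gt_eqF // ltr_wpDl.
have t2 : s * `|Num.max (C m0) (node_load w sg s) - M0| < e / 2.
  apply: le_lt_trans (ler_piMl _ s1) (le_lt_trans (dist_maxr _ _ _) hL) => //.
lra.
Qed.

Lemma excess_root {w sg} : pos_valued w -> frac_valued sg ->
  exists s, 0 < s <= 1 /\ excess w sg s = 0.
Proof.
move=> w_gt0 sg_frac; set W := \sum_n w n.
have W0 : 0 <= W by apply: sumr_ge0 => n _; exact: ltW.
have c0 := C_gt0 m0.
(* Since the load never exceeds W, the excess is nonpositive at a. *)
set a := C m0 / (C m0 + W).
have CW : 0 < C m0 + W by rewrite ltr_wpDr.
have a01 : 0 < a <= 1 by rewrite divr_gt0 //= ler_pdivrMr // mul1r lerDl.
have [|||c /andP[ac c1] ec] := @IVT_eps _ a 1 _ (excess w sg).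
- by case/andP: a01.
- move=> s /andP[aS s1] e e0.
  have s01 : 0 < s <= 1 by rewrite s1 (lt_le_trans _ aS) //; case/andP: a01.
  have [d d0 hd] := excess_continuous w_gt0 sg_frac s01 _ e0.
  exists d => // t /andP[aT t1] ts; apply: hd => //.
  + by rewrite t1 (lt_le_trans _ aT) //; case/andP: a01.
  + exact: nearby_refl.
  + exact: nearby_refl.
- apply/andP; split; last by rewrite /excess mul1r subr_ge0 le_max lexx.
  rewrite /excess subr_le0.
  have /andP[L0 LW] := node_load_bounds w_gt0 sg_frac a01.
  apply: le_trans (_ : a * (C m0 + W) <= C m0); last by rewrite divfK // gt_eqF.
  have a0 : 0 <= a by case/andP: a01 => /ltW.
  by rewrite ler_wpM2l // ge_max lerDl W0 /= (le_trans LW) // lerDr ltW.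
exists c; split => //; rewrite c1 andbT.
by apply: lt_le_trans ac; case/andP: a01.
Qed.

(* Outside the positive parameter domain this is the junk value 1. *)
Definition node_throttle w sg :=
  classical_sets.xget 1 (fun s => 0 < s <= 1 /\ excess w sg s = 0).

Lemma node_throttleP {w sg} : pos_valued w -> frac_valued sg ->
  0 < node_throttle w sg <= 1 /\ excess w sg (node_throttle w sg) = 0.
Proof.
by move=> w_gt0 sg_frac; move: (classical_sets.xgetPex 1 (excess_root w_gt0 sg_frac)).
Qed.

Lemma node_throttle_continuous {w0 sg0} : pos_valued w0 -> frac_valued sg0 ->
  forall e, 0 < e -> exists2 d, 0 < d & forall w sg, pos_valued w -> frac_valued sg ->
  nearby d w w0 -> nearby d sg sg0 -> `|node_throttle w sg - node_throttle w0 sg0| < e.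
Proof.
move=> w0_gt0 sg0_frac e e0.
pose ok (p : ('I_N -> R) * ('I_M -> R)) := pos_valued p.1 /\ frac_valued p.2.
pose close d (p p0 : ('I_N -> R) * ('I_M -> R)) := nearby d p.1 p0.1 /\ nearby d p.2 p0.2.
have [d d' p p0 [c1 c2]|p s t [p1 p2]|p [p1 p2]|p0 s [p1 p2] s01 e' e'0|d d0 hd] :=
  @root_continuous R _ ok close _ (fun p => excess p.1 p.2)
    (fun p => node_throttle p.1 p.2) _ _ _ (w0, sg0) (conj w0_gt0 sg0_frac) e e0.
- by split; split; [move: (nearby_minl c1) | move: (nearby_minl c2)
    | move: (nearby_minr c1) | move: (nearby_minr c2)].
- exact: excess_incr.
- exact: node_throttleP.
- have [d d0 hd] := excess_continuous p1 p2 s01 _ e'0.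
  by exists d => // p [q1 q2] [c1 c2]; apply: hd => //; rewrite subrr normr0.
- by exists d => // w sg w_gt0 sg_frac ww0 sgsg0; apply: (hd (w, sg)).
Qed.

Definition extended_sol w sg := sol w [eta sg with m0 |-> node_throttle w sg].

Lemma extended_sol_fix w sg : pos_valued w -> frac_valued sg ->
  partial_fixpoint (m0 |: F) w sg (extended_sol w sg).
Proof.
move=> w_gt0 sg_frac; have [s01 root] := node_throttleP w_gt0 sg_frac.
have HS := sol_fix w_gt0 (frac_valued_with m0 sg_frac s01).
move=> m; rewrite /extended_sol in_setU1 HS.
have [->|mm0] := eqVneq m m0; last by case: ifP => //=; rewrite (negbTE mm0).
rewrite (negbTE m0F) /= eqxx.
have M0 : 0 < Num.max (C m0) (node_load w sg (node_throttle w sg)).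
  by rewrite lt_max C_gt0.
move/eqP: root; rewrite /excess subr_eq0 => /eqP root.
by apply: (mulIf (lt0r_neq0 M0)); rewrite /throttle divfK ?lt0r_neq0.
Qed.

Lemma extended_sol_continuous : param_continuous extended_sol.
Proof.
move=> w0 sg0 w0_gt0 sg0_frac e e0.
have [s01 _] := node_throttleP w0_gt0 sg0_frac.
have [d1 d10 hd1] := sol_cont _ _ w0_gt0 (frac_valued_with m0 sg0_frac s01) _ e0.
have [d2 d20 hd2] := node_throttle_continuous w0_gt0 sg0_frac _ d10.
exists (Num.min d1 d2) => [|w sg w_gt0 sg_frac ww0 sgsg0]; first by rewrite lt_min d10.
have [s'01 _] := node_throttleP w_gt0 sg_frac.
apply: hd1 => //; first exact: frac_valued_with.
  exact: nearby_minl ww0.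
by move: (nearby_with m0 (nearby_minl sgsg0)
  (hd2 w sg w_gt0 sg_frac (nearby_minr ww0) (nearby_minr sgsg0))).
Qed.

End AddNode.

Lemma solvable_add F m0 : m0 \notin F -> solvable F -> solvable (m0 |: F).
Proof.
move=> m0F [sol sol_fix sol_cont].
exists (extended_sol m0 sol).
  by move=> w sg; apply: (extended_sol_fix _ _ _ m0F sol_fix).
exact: (extended_sol_continuous _ _ _ m0F sol_fix sol_cont).
Qed.

Lemma solvable_all F : solvable F.
Proof.
have [n] := ubnP #|F|; elim: n F => // n IH F; rewrite ltnS => Fn.
have [->|[m0 m0F]] := set_0Vmem F; first exact: solvable0.
rewrite -(setD1K m0F); apply: solvable_add; first by rewrite !inE eqxx.
by apply: IH; move: Fn; rewrite (cardsD1 m0 F) m0F.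
Qed.

Definition flow (ext : 'I_N -> R) S n m :=
  if m \in route n then ext n * transmit S n m else 0.

Lemma transmit_head S n x0 : transmit S n (nth x0 (route n) 0) = 1.
Proof. by rewrite /transmit /upstream; case: (route n) => [|y l] /=; rewrite ?eqxx big_nil. Qed.

Lemma transmit_next S n x0 i : (i.+1 < size (route n))%N ->
  transmit S n (nth x0 (route n) i.+1) =
  transmit S n (nth x0 (route n) i) * S (nth x0 (route n) i).
Proof.
move=> ilt; have ilt' := ltnW ilt.
by rewrite /transmit /upstream !index_uniq // (take_nth x0 ilt') -cats1 big_cat big_seq1.
Qed.

Lemma prev_node_head n x0 : (0 < size (route n))%N ->
  prev_node route n (nth x0 (route n) 0) = None.
Proof. by move=> h; rewrite /prev_node index_uniq. Qed.

Lemma prev_node_next n x0 i : (i.+1 < size (route n))%N ->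
  prev_node route n (nth x0 (route n) i.+1) = Some (nth x0 (route n) i).
Proof.
move=> ilt; rewrite /prev_node index_uniq //; congr Some.
exact/set_nth_default/ltnW.
Qed.

Lemma flow_rhs_flow ext S n m : flow_rhs route ext (flow ext S) S n m = flow ext S n m.
Proof.
rewrite /flow_rhs /flow; case: ifP => // mn.
have ilt : (index m (route n) < size (route n))%N by rewrite index_mem.
have em : m = nth m (route n) (index m (route n)) by rewrite nth_index.
case: (index m (route n)) em ilt => [|i] em ilt.
  by rewrite {1 2}em prev_node_head ?(leq_ltn_trans _ ilt) // em transmit_head mulr1.
by rewrite {1}em prev_node_next // mem_nth ?(ltn_trans _ ilt) // {3}em transmit_next // mulrA.
Qed.

Lemma solution_flow {J rn rhon r rho} : is_solution C route J rn rhon r rho ->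
  r = flow rn (Sfac C route J r rho) /\ rho = flow rhon (Sfac C route J r rho).
Proof.
move=> sol; set S := Sfac C route J r rho.
have on_route n i x0 : (i < size (route n))%N ->
    r n (nth x0 (route n) i) = rn n * transmit S n (nth x0 (route n) i) /\
    rho n (nth x0 (route n) i) = rhon n * transmit S n (nth x0 (route n) i).
  elim: i => [|i IH] ilt.
    have [-> ->] := sol n (nth x0 (route n) 0).
    by rewrite /flow_rhs mem_nth // prev_node_head // transmit_head !mulr1.
  have [IHr IHrho] := IH (ltnW ilt).
  have [-> ->] := sol n (nth x0 (route n) i.+1).
  by rewrite /flow_rhs mem_nth // prev_node_next // IHr IHrho transmit_next // !mulrA.
split; apply/funext => n; apply/funext => m; rewrite /flow.
all: case: ifP => mn; last by have [e1 e2] := sol n m; rewrite ?e1 ?e2 /flow_rhs mn.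
all: have ilt : (index m (route n) < size (route n))%N by rewrite index_mem.
all: by have [] := on_route n _ m ilt; rewrite nth_index.
Qed.

Definition class_weight (J : 'I_N -> nat) (rn rhon : 'I_N -> R) n := (J n)%:R * rn n + rhon n.

Lemma class_weight_gt0 {J rn rhon} : pos_valued rn -> pos_valued rhon ->
  pos_valued (class_weight J rn rhon).
Proof. by move=> rn_gt0 rhon_gt0 n; rewrite ltr_wpDl // mulr_ge0 // ltW. Qed.

Lemma Sfac_flow J rn rhon S :
  Sfac C route J (flow rn S) (flow rhon S) =
  fun m => throttle (C m) (load (class_weight J rn rhon) S m).
Proof.
apply/funext => m; rewrite /Sfac /throttle /load; congr (_ / Num.max _ _).
by apply: eq_bigr => n mn; rewrite /flow mn /class_weight; ring.
Qed.

Lemma flow_solution {J rn rhon sg S} :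
  partial_fixpoint setT (class_weight J rn rhon) sg S ->
  is_solution C route J rn rhon (flow rn S) (flow rhon S).
Proof.
move=> HS; have eS : Sfac C route J (flow rn S) (flow rhon S) = S.
  by rewrite Sfac_flow; apply/funext => m; rewrite HS inE.
by move=> n m; rewrite eS !flow_rhs_flow.
Qed.

Lemma solution_unique {J rn rhon sg S r rho} : pos_valued rn -> pos_valued rhon ->
  frac_valued sg -> partial_fixpoint setT (class_weight J rn rhon) sg S ->
  is_solution C route J rn rhon r rho -> r = flow rn S /\ rho = flow rhon S.
Proof.
move=> rn_gt0 rhon_gt0 sg_frac HS sol; have [er erho] := solution_flow sol.
suff eS : Sfac C route J r rho = S by split; [rewrite {1}er | rewrite {1}erho]; rewrite eS.
apply: fixpoint_unique (class_weight_gt0 rn_gt0 rhon_gt0) frac_valued1 sg_frac _ HS.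
move=> m; rewrite inE /=; set S' := Sfac C route J r rho.
transitivity (Sfac C route J (flow rn S') (flow rhon S') m); first by rewrite -er -erho.
by rewrite Sfac_flow.
Qed.

Lemma dist_flow {ext ext0 S S0} n m {d} : pos_valued ext0 ->
  frac_valued S -> frac_valued S0 -> 0 < d -> nearby d S S0 ->
  `|flow ext S n m - flow ext0 S0 n m| <= `|ext n - ext0 n| + ext0 n * (size (route n))%:R * d.
Proof.
move=> ext0_gt0 S_frac S0_frac d0 SS0; rewrite /flow.
case: ifP => _; last by rewrite subrr normr0 addr_ge0 // !mulr_ge0 // ltW.
have -> : ext n * transmit S n m - ext0 n * transmit S0 n m =
  (ext n - ext0 n) * transmit S n m + ext0 n * (transmit S n m - transmit S0 n m).
  by ring.
apply: le_trans (ler_normD _ _) _; rewrite !normrM -mulrA.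
have /andP[t0 t1] := transmit_frac n m S_frac.
rewrite (gtr0_norm t0) (gtr0_norm (ext0_gt0 n)) lerD ?ler_piMr //.
rewrite ler_wpM2l ?(ltW (ext0_gt0 n)) //.
apply: le_trans (dist_prod_frac _ S_frac S0_frac (fun k => ltW (SS0 k))) _.
by rewrite ler_wpM2r ?(ltW d0) // ler_nat size_upstream.
Qed.

Lemma nearby_class_weight J {d rn rn0 rhon rhon0} : nearby d rn rn0 -> nearby d rhon rhon0 ->
  nearby (d * (\sum_n (J n)%:R + 1)) (class_weight J rn rhon) (class_weight J rn0 rhon0).
Proof.
move=> rnc rhonc n; have d0 : 0 < d := le_lt_trans (normr_ge0 _) (rnc n).
have -> : class_weight J rn rhon n - class_weight J rn0 rhon0 n =
  (J n)%:R * (rn n - rn0 n) + (rhon n - rhon0 n) by rewrite /class_weight; ring.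
apply: le_lt_trans (ler_normD _ _) _; rewrite normrM ger0_norm //.
have Jn : (J n)%:R <= \sum_n (J n)%:R :> R by rewrite (bigD1 n) //= lerDl sumr_ge0.
have := rnc n; have := rhonc n; have : (J n)%:R * `|rn n - rn0 n| <= (J n)%:R * d.
  by rewrite ler_wpM2l // ltW.
have : (J n)%:R * d <= (\sum_n (J n)%:R) * d by rewrite ler_wpM2r // ltW.
lra.
Qed.

Lemma flow_continuous J (sol : ('I_N -> R) -> ('I_M -> R) -> 'I_M -> R) :
  (forall w sg, pos_valued w -> frac_valued sg -> frac_valued (sol w sg)) ->
  param_continuous sol ->
  let S rn rhon := sol (class_weight J rn rhon) (fun=> 1) in
  forall rn0 rhon0, pos_valued rn0 -> pos_valued rhon0 ->
  forall eps, 0 < eps -> exists2 delta, 0 < delta & forall rn rhon,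
    pos_valued rn -> pos_valued rhon ->
    (forall n, `|rn n - rn0 n| < delta /\ `|rhon n - rhon0 n| < delta) ->
    forall n m, `|flow rn (S rn rhon) n m - flow rn0 (S rn0 rhon0) n m| < eps /\
                `|flow rhon (S rn rhon) n m - flow rhon0 (S rn0 rhon0) n m| < eps.
Proof.
move=> sol_frac sol_cont S rn0 rhon0 rn0_gt0 rhon0_gt0 eps eps0.
have w0_gt0 := class_weight_gt0 (J := J) rn0_gt0 rhon0_gt0.
set B := \sum_n (rn0 n + rhon0 n) * (size (route n))%:R + 1.
have sum_ge0 : 0 <= \sum_n (rn0 n + rhon0 n) * (size (route n))%:R.
  by apply: sumr_ge0 => k _; rewrite mulr_ge0 // addr_ge0 // ltW.
have B0 : 0 < B by rewrite ltr_wpDl.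
have Bge n : (rn0 n + rhon0 n) * (size (route n))%:R <= B.
  rewrite /B (bigD1 n) //= -addrA lerDl addr_ge0 // sumr_ge0 // => k _.
  by rewrite mulr_ge0 // addr_ge0 // ltW.
set Jb := \sum_n (J n)%:R + 1 : R.
have Jb0 : 0 < Jb by rewrite ltr_wpDl // sumr_ge0.
set e1 := eps / (2 * B).
have e10 : 0 < e1 by rewrite divr_gt0 // mulr_gt0.
have [d1 d10 hd1] := sol_cont _ _ w0_gt0 frac_valued1 _ e10.
exists (Num.min (d1 / Jb) (eps / 2)) => [|rn rhon rn_gt0 rhon_gt0 close n m].
  by rewrite lt_min divr_gt0 ?divr_gt0.
have [rnc rhonc] : nearby (Num.min (d1 / Jb) (eps / 2)) rn rn0 /\
    nearby (Num.min (d1 / Jb) (eps / 2)) rhon rhon0 by split=> k; case: (close k).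
have ww0 := nearby_class_weight J (nearby_minl rnc) (nearby_minl rhonc).
rewrite divfK ?gt_eqF // in ww0.
have SS0 := hd1 _ _ (class_weight_gt0 rn_gt0 rhon_gt0) frac_valued1 ww0 (nearby_refl d10).
have S_frac := sol_frac _ _ (class_weight_gt0 (J := J) rn_gt0 rhon_gt0) frac_valued1.
have S0_frac := sol_frac _ _ w0_gt0 frac_valued1.
have close_flow ext ext0 : pos_valued ext0 -> (ext0 n <= rn0 n + rhon0 n) ->
    nearby (eps / 2) ext ext0 ->
    `|flow ext (S rn rhon) n m - flow ext0 (S rn0 rhon0) n m| < eps.
  move=> ext0_gt0 ext0_le ext_close.
  apply: le_lt_trans (dist_flow n m ext0_gt0 S_frac S0_frac e10 SS0) _.
  have : ext0 n * (size (route n))%:R * e1 <= eps / 2.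
    rewrite (_ : eps / 2 = B * e1); last by rewrite /e1; field; rewrite gt_eqF.
    rewrite ler_wpM2r ?(ltW e10) // (le_trans _ (Bge n)) // ler_wpM2r //.
  by have := ext_close n; lra.
split; apply: close_flow => //.
- by rewrite lerDl ltW.
- exact: nearby_minr rnc.
- by rewrite lerDr ltW.
- exact: nearby_minr rhonc.
Qed.

End Network.


Theorem mainTheorem2 (R : realType) (M N : nat) (C : 'I_M -> R)
  (route : 'I_N -> seq 'I_M) (J : 'I_N -> nat) :
  (forall m, 0 < C m) ->
  (forall n, uniq (route n)) ->
  exists sol : ('I_N -> R) -> ('I_N -> R) ->
               (('I_N -> 'I_M -> R) * ('I_N -> 'I_M -> R)),
    (* existence and uniqueness for all positive parameters *)
    (forall rn rhon : 'I_N -> R,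
       (forall n, 0 < rn n) -> (forall n, 0 < rhon n) ->
       is_solution C route J rn rhon (sol rn rhon).1 (sol rn rhon).2 /\
       (forall r rho, is_solution C route J rn rhon r rho ->
          forall n m, r n m = (sol rn rhon).1 n m /\
                      rho n m = (sol rn rhon).2 n m)) /\
    (* continuity in (rn, rhon) on the positive parameter domain *)
    (forall rn0 rhon0 : 'I_N -> R,
       (forall n, 0 < rn0 n) -> (forall n, 0 < rhon0 n) ->
       forall eps : R, 0 < eps -> exists2 delta : R, 0 < delta &
         forall rn rhon : 'I_N -> R,
           (forall n, 0 < rn n) -> (forall n, 0 < rhon n) ->
           (forall n, `|rn n - rn0 n| < delta /\ `|rhon n - rhon0 n| < delta) ->
           forall n m,
             `|(sol rn rhon).1 n m - (sol rn0 rhon0).1 n m| < eps /\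
             `|(sol rn rhon).2 n m - (sol rn0 rhon0).2 n m| < eps).
Proof.
move=> C_gt0 route_uniq.
have [S S_fix S_cont] := solvable_all C route C_gt0 route_uniq setT.
have S_frac w sg : pos_valued w -> frac_valued sg -> frac_valued (S w sg).
  by move=> w_gt0 sg_frac; apply: (partial_fixpoint_frac C route C_gt0 sg_frac); exact: S_fix.
pose S1 rn rhon := S (class_weight J rn rhon) (fun=> 1).
exists (fun rn rhon => (flow route rn (S1 rn rhon), flow route rhon (S1 rn rhon))).
split; last exact: flow_continuous route J S S_frac S_cont.
move=> rn rhon rn_gt0 rhon_gt0.
have S1_fix := S_fix _ _ (class_weight_gt0 (J := J) rn_gt0 rhon_gt0) frac_valued1.
split=> [|r rho sol n m] /=; first by move: (flow_solution C route route_uniq S1_fix).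
by have [-> ->] := solution_unique C route C_gt0 route_uniq rn_gt0 rhon_gt0 frac_valued1 S1_fix sol.
Qed.
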